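(* Let $k$ be a finite field of odd characteristic and $b:V\times V\to W$ a non-degenerate Hermitian $k$-bilinear map which is $\perp$-indecomposable. Then for every $x\in\operatorname{Adj}(b)$ the element $x+x^*$ is either invertible or nilpotent. In particular every $x\in\operatorname{Sym}(b)$ is invertible or nilpotent.
   Context: $b$ is Hermitian if $W=b(V,V)$ and $b(u,v)=b(v,u)\theta$ for some $\theta\in\mathrm{GL}(W)$; non-degenerate if $b(u,V)=0=b(V,u)$ implies $u=0$. $\operatorname{Adj}(b)$ is the set of $f\in\operatorname{End}V$ with an (unique) adjoint $f^*\in\operatorname{End}V$ satisfying $b(uf,v)=b(u,vf^* )$ for all $u,v$; $\operatorname{Sym}(b)=\{f\in\operatorname{End}V: b(uf,v)=b(u,vf)\ \forall u,v\}$. $b$ is $\perp$-indecomposable if there is no set $\mathcal{X}\neq\{V\}$ of subspaces, pairwise $b$-orthogonal, generating $V$ with no proper subset generating $V$. *)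

From HB Require Import structures.
From mathcomp Require Import all_boot all_order all_algebra all_field.
Set Implicit Arguments. Unset Strict Implicit. Unset Printing Implicit Defensive.
Import GRing.Theory.
Local Open Scope ring_scope.

Definition bilin_map (k : fieldType) (V W : vectType k) (b : V -> V -> W) : Prop :=
  (forall (a : k) u1 u2 v, b (a *: u1 + u2) v = a *: b u1 v + b u2 v) /\
  (forall (a : k) u v1 v2, b u (a *: v1 + v2) = a *: b u v1 + b u v2).

Definition lfun_invertible (k : fieldType) (V : vectType k) (f : 'End(V)) : Prop :=
  exists g : 'End(V), (g \o f = \1)%VF /\ (f \o g = \1)%VF.

Definition lfun_nilpotent (k : fieldType) (V : vectType k) (f : 'End(V)) : Prop :=
  exists n : nat, iter n (fun g : 'End(V) => (f \o g)%VF) \1%VF = 0.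

(* W = b(V,V): W is generated (as a k-space) by the values b(u,v). *)
Definition pb_full_image (k : fieldType) (V W : vectType k) (b : V -> V -> W) : Prop :=
  forall U : {vspace W}, (forall u v, b u v \in U) -> U = fullv.

Definition pb_hermitian (k : fieldType) (V W : vectType k) (b : V -> V -> W) : Prop :=
  pb_full_image b /\
  exists theta : 'End(W), lfun_invertible theta /\ forall u v, b u v = theta (b v u).

Definition pb_nondegenerate (k : fieldType) (V W : vectType k) (b : V -> V -> W) : Prop :=
  forall u, (forall v, b u v = 0) -> (forall v, b v u = 0) -> u = 0.

Definition pb_pairwise_orth (k : fieldType) (V W : vectType k) (b : V -> V -> W)
  (X : seq {vspace V}) : Prop :=
  forall U1 U2, U1 \in X -> U2 \in X -> U1 != U2 ->
    forall u v, u \in U1 -> v \in U2 -> b u v = 0.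

Definition pb_generates (k : fieldType) (V : vectType k) (X : seq {vspace V}) : Prop :=
  (\sum_(U <- X) U)%VS = fullv.

Definition pb_perp_indecomposable (k : fieldType) (V W : vectType k) (b : V -> V -> W) : Prop :=
  forall X : seq {vspace V}, uniq X -> pb_pairwise_orth b X -> pb_generates X ->
    (forall Y : seq {vspace V}, {subset Y <= X} -> pb_generates Y -> {subset X <= Y}) ->
    X =i [:: fullv].

From HB Require Import structures.
From mathcomp Require Import all_boot all_order all_algebra all_field.
Import GRing.Theory.
From mathcomp Require Import zify.

Set Implicit Arguments.
Unset Strict Implicit.
Unset Printing Implicit Defensive.
Local Open Scope ring_scope.

(* If s is self-adjoint for b then so is every power s^n; for n large enough
   (Fitting's lemma) V = ker s^n + im s^n, and b(u, s^n w) = b(s^n u, w) = 0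
   for u in ker s^n, so this sum is b-orthogonal.  By perp-indecomposability
   one summand is all of V: s^n = 0 or s is onto.  For x in Adj(b) the
   Hermitian symmetry b(u,v) = theta b(v,u) gives b(x* u, v) = b(u, x v),
   so x + x* is self-adjoint. *)

Section Fitting.
Variables (k : fieldType) (V : vectType k) (s : 'End(V)).

Definition lfun_pow n := iter n (fun g : 'End(V) => (s \o g)%VF) \1%VF.

Lemma lfun_powS n : lfun_pow n.+1 = (s \o lfun_pow n)%VF.
Proof. by []. Qed.

Lemma lfun_powD m n : lfun_pow (m + n) = (lfun_pow m \o lfun_pow n)%VF.
Proof.
elim: m => [|m IHm]; first by rewrite add0n comp_lfun1l.
by rewrite addSn !lfun_powS IHm comp_lfunA.
Qed.

Lemma lfun_powSr n : lfun_pow n.+1 = (lfun_pow n \o s)%VF.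
Proof. by rewrite -addn1 lfun_powD /lfun_pow /= comp_lfun1r. Qed.

Lemma limg_lfun_powS n : (limg (lfun_pow n.+1) <= limg (lfun_pow n))%VS.
Proof. by rewrite lfun_powSr limg_comp limgS ?subvf. Qed.

Lemma limg_lfun_pow_stable : exists i, limg (lfun_pow i.+1) = limg (lfun_pow i).
Proof.
suff stable_from d m : (\dim (limg (lfun_pow m)) <= d)%N ->
    exists i, limg (lfun_pow i.+1) = limg (lfun_pow i).
  exact: (stable_from _ 0 (leqnn _)).
elim: d m => [|d IHd] m dim_m;
  have [|ne_m] := eqVneq (limg (lfun_pow m.+1)) (limg (lfun_pow m)); try by exists m.
all: have lt_m : (\dim (limg (lfun_pow m.+1)) < \dim (limg (lfun_pow m)))%N
  by rewrite (ltn_leqif (dimv_leqif_eq (limg_lfun_powS m))) ne_m.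
- by move: dim_m; rewrite leqn0 => /eqP dim0; rewrite dim0 in lt_m.
- by apply: (IHd m.+1); rewrite -ltnS (leq_trans lt_m).
Qed.

Lemma fitting_decomposition :
  exists n, (lker (lfun_pow n.+1) + limg (lfun_pow n.+1) = fullv)%VS.
Proof.
have [i stable_i] := limg_lfun_pow_stable.
have stable_after j : limg (lfun_pow (j + i)) = limg (lfun_pow i).
  elim: j => [|j IHj] //.
  by rewrite addSn lfun_powS limg_comp IHj -limg_comp -lfun_powS.
exists i; set n := i.+1; set K := lker _; set I := limg _.
have disjoint_KI : \dim (I :&: K) = 0%N.
  have := limg_ker_dim (lfun_pow n) I.
  rewrite -limg_comp -lfun_powD addnS -addSn stable_after -stable_i -/I -/K; lia.
apply/eqP; rewrite eqEdim subvf /=.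
have := dimv_sum_cap K I; have := limg_ker_dim (lfun_pow n) fullv.
rewrite capfv capvC disjoint_KI -/K -/I; lia.
Qed.

Lemma limg_full_lfun_invertible : limg s = fullv -> lfun_invertible s.
Proof.
move=> img_s.
have ker_s : lker s == 0%VS.
  by have := limg_ker_dim s fullv; rewrite capfv img_s -dimv_eq0; lia.
by exists (s^-1)%VF; split; [exact: lker0_compVf | exact: lker0_compfV].
Qed.

Lemma limg_lfun_pow_full_invertible n :
  limg (lfun_pow n.+1) = fullv -> lfun_invertible s.
Proof.
move=> img_full; apply: limg_full_lfun_invertible; apply/eqP.
by rewrite eqEsubv subvf /= -{1}img_full lfun_powS limg_comp limgS ?subvf.
Qed.

Lemma lker_lfun_pow_full_nilpotent n :
  lker (lfun_pow n) = fullv -> lfun_nilpotent s.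
Proof.
move=> ker_full; exists n; apply/lfunP => u; rewrite zero_lfunE.
by apply/eqP; rewrite -memv_ker ker_full memvf.
Qed.

End Fitting.

Arguments fitting_decomposition {k V} s.

Lemma subv_sum_seq (k : fieldType) (V : vectType k) (Y : seq {vspace V})
    (U : {vspace V}) :
  (forall X, X \in Y -> (X <= U)%VS) -> (\sum_(X <- Y) X <= U)%VS.
Proof.
move=> sub_U; rewrite big_seq.
elim/big_rec: _ => [|X S X_Y S_U]; first exact: sub0v.
by rewrite subv_add sub_U.
Qed.

Section BilinearMap.
Variables (k : fieldType) (V W : vectType k) (b : V -> V -> W).
Hypothesis b_bilin : bilin_map b.

Lemma bilin_mapDl u1 u2 v : b (u1 + u2) v = b u1 v + b u2 v.
Proof. by have := b_bilin.1 1 u1 u2 v; rewrite !scale1r. Qed.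

Lemma bilin_mapDr u v1 v2 : b u (v1 + v2) = b u v1 + b u v2.
Proof. by have := b_bilin.2 1 u v1 v2; rewrite !scale1r. Qed.

Lemma bilin_map0l v : b 0 v = 0.
Proof. by apply: (addrI (b 0 v)); rewrite -bilin_mapDl !addr0. Qed.

Lemma bilin_map0r u : b u 0 = 0.
Proof. by apply: (addrI (b u 0)); rewrite -bilin_mapDr !addr0. Qed.

Lemma pb_perp_indecomposable_split (U1 U2 : {vspace V}) :
  pb_perp_indecomposable b -> (U1 + U2 = fullv)%VS ->
  (forall u v, u \in U1 -> v \in U2 -> b u v = 0 /\ b v u = 0) ->
  U1 = fullv \/ U2 = fullv.
Proof.
move=> indec sum_full orth.
have [->|ne1] := eqVneq U1 fullv; first by left.
have [->|ne2] := eqVneq U2 fullv; first by right.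
have not_full (U : {vspace V}) : U != fullv -> ~~ (fullv <= U)%VS.
  by apply: contraNN => full_U; rewrite eqEsubv subvf.
have ne12 : U1 != U2.
  by apply: (contra_neq _ ne1) => eq12; rewrite -sum_full eq12 addvv.
have orth12 : pb_pairwise_orth b [:: U1; U2].
  move=> X1 X2; rewrite !inE => /orP[]/eqP-> /orP[]/eqP->; rewrite ?eqxx // => _ u v.
    by move=> u1 v2; have [] := orth u v u1 v2.
  by move=> u2 v1; have [] := orth v u v1 u2.
have gen12 : pb_generates [:: U1; U2].
  by rewrite /pb_generates !big_cons big_nil addv0.
have sum_other (Y : seq {vspace V}) (U U' : {vspace V}) :
    {subset Y <= [:: U; U']} -> U \notin Y -> (\sum_(X <- Y) X <= U')%VS.
  move=> sub_Y U_Y; apply: subv_sum_seq => X X_Y.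
  have := sub_Y X X_Y; rewrite !inE => /orP[]/eqP EX; last by rewrite EX.
  by rewrite -EX X_Y in U_Y.
have minimal12 (Y : seq {vspace V}) : {subset Y <= [:: U1; U2]} -> pb_generates Y ->
    {subset [:: U1; U2] <= Y}.
  move=> sub_Y gen_Y X; rewrite !inE => /orP[]/eqP->; apply: contraLR isT => U_Y.
    by case/negP: (not_full _ ne2); rewrite -gen_Y (sum_other _ U1).
  case/negP: (not_full _ ne1); rewrite -gen_Y (sum_other _ U2) // => X' X'_Y.
  by have := sub_Y X' X'_Y; rewrite !inE orbC.
have := indec _ _ orth12 gen12 minimal12 U1.
by rewrite /= !inE eqxx ne12 (negPf ne1) => /(_ isT).
Qed.

Section SelfAdjoint.
Variable s : 'End(V).
Hypothesis s_selfadj : forall u v, b (s u) v = b u (s v).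

Lemma lfun_pow_selfadj n u v : b (lfun_pow s n u) v = b u (lfun_pow s n v).
Proof.
elim: n u v => [|n IHn] u v; first by rewrite !id_lfunE.
by rewrite lfun_powS comp_lfunE s_selfadj IHn -lfun_powS lfun_powSr comp_lfunE.
Qed.

Lemma lker_limg_lfun_pow_orth n u v :
  u \in lker (lfun_pow s n) -> v \in limg (lfun_pow s n) -> b u v = 0 /\ b v u = 0.
Proof.
rewrite memv_ker => /eqP ker_u /memv_imgP [w _ ->].
split; [rewrite -lfun_pow_selfadj | rewrite lfun_pow_selfadj].
  by rewrite ker_u bilin_map0l.
by rewrite ker_u bilin_map0r.
Qed.

Lemma selfadj_invertible_or_nilpotent :
  pb_perp_indecomposable b -> lfun_invertible s \/ lfun_nilpotent s.
Proof.
move=> indec; have [n fitting] := fitting_decomposition s.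
have [ker_full|img_full] :=
  pb_perp_indecomposable_split indec fitting (@lker_limg_lfun_pow_orth n.+1).
- by right; exact: lker_lfun_pow_full_nilpotent ker_full.
- by left; exact: limg_lfun_pow_full_invertible img_full.
Qed.

End SelfAdjoint.

Lemma adjoint_add_selfadj (theta : 'End(W)) (x xs : 'End(V)) :
  (forall u v, b u v = theta (b v u)) -> (forall u v, b (x u) v = b u (xs v)) ->
  forall u v, b ((x + xs) u) v = b u ((x + xs) v).
Proof.
move=> herm adj u v.
rewrite !add_lfunE bilin_mapDl bilin_mapDr adj addrC; congr (_ + _).
by rewrite herm -adj -herm.
Qed.

End BilinearMap.

Theorem lemma4p33 (k : finFieldType) (V W : vectType k) (b : V -> V -> W) :
  (2%:R : k) != 0 ->
  bilin_map b -> pb_nondegenerate b -> pb_hermitian b -> pb_perp_indecomposable b ->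
  (forall x xs : 'End(V), (forall u v, b (x u) v = b u (xs v)) ->
     lfun_invertible (x + xs) \/ lfun_nilpotent (x + xs)) /\
  (forall f : 'End(V), (forall u v, b (f u) v = b u (f v)) ->
     lfun_invertible f \/ lfun_nilpotent f).
Proof.
move=> _ b_bilin _ [_ [theta [_ herm]]] indec.
split => [x xs /(adjoint_add_selfadj b_bilin herm) | f] selfadj;
  exact: (selfadj_invertible_or_nilpotent b_bilin selfadj indec).
Qed.
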